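(* Let $3\leq m\leq n$, $\ell=m-1$. If $m\leq\rho(n-1)$, then $\mathfrak{C}\not\subset\mathfrak{S}$.
   Context: $\rho$ is the Hurwitz–Radon function: $\rho(k)=2^b+8c$ where $k=(2a+1)2^{b+4c}$, $a,b,c\geq0$ integers, $0\leq b<4$. For $Y=(Y_1;\ldots;Y_\ell)\in\mathbb{R}^{n\times n\times\ell}$ and $\mathbf{a}\in\mathbb{R}^m$, $M(\mathbf{a},Y)=\sum_{k=1}^\ell a_kY_k-a_mE_n$; $\mathfrak{C}=\{Y\mid\det M(\mathbf{a},Y)<0\text{ for some }\mathbf{a}\}$. $V(Y)=\{\mathbf{a}\in\mathbb{R}^n\mid \sum_{k=1}^\ell x_kY_k\mathbf{a}=x_m\mathbf{a}\text{ for some }(x_1,\ldots,x_m)^\top\neq\mathbf{0}\}$, $\hat V(Y)$ its linear span, $\mathfrak{S}=\{Y\mid\dim\hat V(Y)=n\}$. *)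

From HB Require Import structures.
From mathcomp Require Import all_boot all_order all_algebra.
Set Implicit Arguments. Unset Strict Implicit. Unset Printing Implicit Defensive.
Import Order.TTheory GRing.Theory Num.Theory.
Local Open Scope ring_scope.

(* Hurwitz--Radon function: k = (2a+1) 2^(b+4c), 0 <= b < 4, rho k = 2^b + 8c.
   With e = logn 2 k we have b = e %% 4 and c = e %/ 4. *)
Definition rho (k : nat) : nat :=
  (2 ^ (logn 2 k %% 4) + 8 * (logn 2 k %/ 4))%N.

Section Defs.
Variable R : rcfType.

(* Y = (Y_1; ...; Y_l), a = (a_1, ..., a_{l+1}) with m = l+1;
   the last index ord_max plays the role of a_m. *)
Definition Mmat (l n : nat) (a : 'I_l.+1 -> R) (Y : 'I_l -> 'M[R]_n) : 'M[R]_n :=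
  \sum_(k < l) a (widen_ord (leqnSn l) k) *: Y k - a ord_max *: 1%:M.

Definition inC (l n : nat) (Y : 'I_l -> 'M[R]_n) : Prop :=
  exists a : 'I_l.+1 -> R, \det (Mmat a Y) < 0.

(* V(Y), vectors of R^n represented as row vectors v (acting as columns v^T) *)
Definition Vset (l n : nat) (Y : 'I_l -> 'M[R]_n) (v : 'rV[R]_n) : Prop :=
  exists x : 'I_l.+1 -> R, (exists i, x i != 0) /\
    (\sum_(k < l) x (widen_ord (leqnSn l) k) *: Y k) *m v^T = x ord_max *: v^T.

Definition span_of (n : nat) (S : 'rV[R]_n -> Prop) (w : 'rV[R]_n) : Prop :=
  exists (k : nat) (B : 'M[R]_(k, n)), (forall i, S (row i B)) /\ (w <= B)%MS.

Definition has_dim (n : nat) (U : 'rV[R]_n -> Prop) (d : nat) : Prop :=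
  exists B : 'M[R]_(d, n),
    (forall i, U (row i B)) /\ row_free B /\ (forall w, U w -> (w <= B)%MS).

Definition inS (l n : nat) (Y : 'I_l -> 'M[R]_n) : Prop :=
  has_dim (span_of (Vset Y)) n.

End Defs.

From HB Require Import structures.
From mathcomp Require Import all_boot all_order all_algebra.
From mathcomp Require Import zify.
Set Implicit Arguments. Unset Strict Implicit. Unset Printing Implicit Defensive.
Import Order.TTheory GRing.Theory Num.Theory.
Local Open Scope ring_scope.

(* Write n = 1 + N.  The hypothesis m <= rho(N) with m >= 3 forces N to be
   even, so n is odd, and by Hurwitz--Radon there are m - 1 < rho(N) real
   N x N matrices A_i that pairwise anticommute and square to -1.  Every
   nonzero combination sum x_i A_i then squares to -(sum x_i^2) I and has no
   real eigenvector.  For Y_i = diag(0, A_i):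
   - a = (0, ..., 0, 1) gives M(a, Y) = -I_n, of determinant -1, so Y is in
     frak C;
   - every vector of V(Y) is a multiple of the first basis vector, so the
     span of V(Y) has dimension 1 < n and Y is not in frak S. *)

Section Anticommutation.
Variable T : pzRingType.

Definition anti (x y : T) := x * y == - (y * x).

Lemma antiP x y : reflect (x * y = - (y * x)) (anti x y).
Proof. exact: eqP. Qed.

Lemma anti_sym x y : anti x y -> anti y x.
Proof. by move/antiP=> h; apply/antiP; rewrite h opprK. Qed.

Lemma anti_anti_comm y u v : anti y u -> anti y v -> GRing.comm y (u * v).
Proof.
move=> /antiP hu /antiP hv.
by rewrite /GRing.comm mulrA hu mulNr -(mulrA u y v) hv mulrN opprK mulrA.
Qed.

Lemma anti_comm_anti y u v : anti y u -> GRing.comm y v -> anti y (u * v).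
Proof. by move=> /antiP hu hv; apply/antiP; rewrite mulrA hu mulNr -(mulrA u y v) hv mulrA. Qed.

Lemma comm_anti_anti y u v : GRing.comm y u -> anti y v -> anti y (u * v).
Proof. by move=> hu /antiP hv; apply/antiP; rewrite mulrA hu -(mulrA u y v) hv mulrN mulrA. Qed.

Lemma comm_comm_comm (y u v : T) : GRing.comm y u -> GRing.comm y v -> GRing.comm y (u * v).
Proof. by move=> hu hv; rewrite /GRing.comm mulrA hu -(mulrA u y v) hv mulrA. Qed.

Lemma sqr_anti_prod (s : bool) x y :
  x * x = (-1) ^+ s -> y * y = (-1) ^+ s :> T -> anti x y -> (x * y) * (x * y) = -1.
Proof.
move=> xx yy /anti_sym /antiP yx.
by rewrite -mulrA (mulrA y) yx mulNr mulrN !mulrA -(mulrA _ y) xx yy -signr_addb addbb.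
Qed.

Lemma sqr_mul_anti x w : anti x w -> w * w = 1 -> (x * w) * (x * w) = - (x * x).
Proof.
move=> /anti_sym /antiP wx ww.
by rewrite -mulrA (mulrA w) wx mulNr mulrN -(mulrA x w) ww mulr1.
Qed.

Lemma anti_mul_anti x y w :
  anti x w -> anti y w -> w * w = 1 -> anti x y -> anti (x * w) (y * w).
Proof.
move=> xw yw ww /antiP xy; apply/antiP.
have E u v : anti v w -> (u * w) * (v * w) = - (u * v).
  move=> /anti_sym /antiP wv.
  by rewrite -mulrA (mulrA w) wv mulNr mulrN -(mulrA v w) ww mulr1.
by rewrite !E // xy.
Qed.

End Anticommutation.

Section SignedFamily.
Variable T : pzRingType.

Definition signed_family (L : seq (bool * T)) :=
  all (fun p : bool * T => p.2 * p.2 == (-1) ^+ p.1) L &&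
  pairwise (fun p q : bool * T => anti p.2 q.2) L.

Lemma signed_family_cons (p : bool * T) L : signed_family (p :: L) =
  [&& p.2 * p.2 == (-1) ^+ p.1, all (fun q => anti p.2 q.2) L & signed_family L].
Proof. by rewrite /signed_family pairwise_cons /= -!andbA; congr andb; rewrite andbCA. Qed.

Lemma signed_family_filter L : signed_family L -> signed_family (filter fst L).
Proof.
case/andP=> sq pw; apply/andP; split; last exact: pairwise_filter.
by apply/allP=> p; rewrite mem_filter => /andP[_ /(allP sq)].
Qed.

Lemma signed_family_adjoin2 a b :
  signed_family [:: (true, a); (true, b)] ->
  signed_family [:: (true, a * b); (true, a); (true, b)].
Proof.
rewrite !signed_family_cons /= !andbT => /and3P[/eqP aa ab /eqP bb].
rewrite (sqr_anti_prod (s := true) aa bb ab) aa bb ab !eqxx /= !andbT.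
apply/andP; split; apply: anti_sym.
- exact: comm_anti_anti (erefl _) ab.
- exact: anti_comm_anti (anti_sym ab) (erefl _).
Qed.

Definition prod4 (a b c e : T) := (a * b) * (c * e).

Section Product4.
Variables a b c e : T.
Hypotheses (ab : anti a b) (ac : anti a c) (ae : anti a e)
           (bc : anti b c) (be : anti b e) (ce : anti c e).
Local Notation w := (prod4 a b c e).

Lemma anti_prod4_1 : anti a w.
Proof. exact: anti_comm_anti (comm_anti_anti (erefl _) ab) (anti_anti_comm ac ae). Qed.
Lemma anti_prod4_2 : anti b w.
Proof. exact: anti_comm_anti (anti_comm_anti (anti_sym ab) (erefl _)) (anti_anti_comm bc be). Qed.
Lemma anti_prod4_3 : anti c w.
Proof.
exact: comm_anti_anti (anti_anti_comm (anti_sym ac) (anti_sym bc)) (comm_anti_anti (erefl _) ce).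
Qed.
Lemma anti_prod4_4 : anti e w.
Proof.
exact: comm_anti_anti (anti_anti_comm (anti_sym ae) (anti_sym be))
  (anti_comm_anti (anti_sym ce) (erefl _)).
Qed.

Lemma comm_prod4 y : anti y a -> anti y b -> anti y c -> anti y e -> GRing.comm y w.
Proof. by move=> ya yb yc ye; apply: comm_comm_comm; apply: anti_anti_comm. Qed.

Lemma sqr_prod4 (s t : bool) :
  a * a = (-1) ^+ s -> b * b = (-1) ^+ s -> c * c = (-1) ^+ t -> e * e = (-1) ^+ t ->
  w * w = 1.
Proof.
move=> aa bb cc ee.
have wc : GRing.comm (c * e) (a * b).
  by apply: comm_comm_comm; symmetry; apply: anti_anti_comm.
rewrite /prod4 -mulrA (mulrA (c * e)) wc -(mulrA (a * b)) mulrA.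
by rewrite (sqr_anti_prod aa bb ab) (sqr_anti_prod cc ee ce) mulrNN mulr1.
Qed.
End Product4.

Lemma signed_family_adjoin4 a b c e (s t : bool) :
  signed_family [:: (s, a); (s, b); (t, c); (t, e)] ->
  signed_family [:: (false, prod4 a b c e); (s, a); (s, b); (t, c); (t, e)].
Proof.
move=> F; rewrite signed_family_cons F andbT; move: F.
rewrite !signed_family_cons /= !andbT => /andP[/eqP aa /andP[/and3P[ab ac ae]
  /andP[/eqP bb /andP[/andP[bc be] /andP[/eqP cc /andP[ce /eqP ee]]]]]].
rewrite (sqr_prod4 ab ac ae bc be ce aa bb cc ee) eqxx /=.
by apply/and4P; split; apply: anti_sym;
  [exact: anti_prod4_1 | exact: anti_prod4_2 | exact: anti_prod4_3 | exact: anti_prod4_4].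
Qed.

Lemma signed_family_flip4 a b c e L :
  signed_family [:: (false, a), (false, b), (false, c), (false, e) & L] ->
  signed_family [:: (true, a * prod4 a b c e), (true, b * prod4 a b c e),
                    (true, c * prod4 a b c e), (true, e * prod4 a b c e) & L].
Proof.
move=> F; set w := prod4 a b c e; move: F; rewrite !signed_family_cons /=.
move=> /andP[/eqP aa /andP[/and4P[ab ac ae aL] /andP[/eqP bb /andP[/and3P[bc be bL]
  /andP[/eqP cc /andP[/andP[ce cL] /andP[/eqP ee /andP[eL FL]]]]]]]].
have ww : w * w = 1 := sqr_prod4 (s := false) (t := false) ab ac ae bc be ce aa bb cc ee.
have aw := anti_prod4_1 ab ac ae.
have bw := anti_prod4_2 ab bc be.
have cw := anti_prod4_3 ac bc ce.
have ew := anti_prod4_4 ae be ce.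
have Lw q : q \in L -> GRing.comm q.2 w.
  move=> qL; apply: comm_prod4; apply: anti_sym;
    [exact: (allP aL) | exact: (allP bL) | exact: (allP cL) | exact: (allP eL)].
have flipL x : all (fun q => anti x q.2) L -> all (fun q => anti (x * w) q.2) L.
  move=> xL; apply/allP=> q qL; apply: anti_sym; apply: anti_comm_anti (Lw q qL).
  exact: anti_sym (allP xL q qL).
rewrite (sqr_mul_anti aw ww) (sqr_mul_anti bw ww) (sqr_mul_anti cw ww) (sqr_mul_anti ew ww).
rewrite aa bb cc ee !eqxx !flipL // FL.
by rewrite !anti_mul_anti.
Qed.

End SignedFamily.

Section Doubling.
Variables (R : pzRingType) (d : nat).

Definition diag2 (x y : 'M[R]_d) : 'M[R]_(d + d) := block_mx x 0 0 y.
Definition dbl (x : 'M[R]_d) := diag2 x (- x).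
Definition Jmx : 'M[R]_(d + d) := block_mx 0 1 (-1) 0.
Definition Qmx : 'M[R]_(d + d) := block_mx 0 1 1 0.

Local Notation block_mxE :=
  (mul0mx, mulmx0, addr0, add0r, mulmx1, mul1mx, mulmxN, mulNmx, oppr0, opprK).

Lemma mul_diag2 a b c e : diag2 a b * diag2 c e = diag2 (a * c) (b * e).
Proof. by rewrite -mulmxE mulmx_block !block_mxE !mulmxE. Qed.

Lemma diag2_sign (s : bool) : diag2 ((-1) ^+ s) ((-1) ^+ s) = (-1) ^+ s.
Proof.
have one2 : diag2 1 1 = 1 by rewrite /diag2 -(scalar_mx_block d d (1 : R)).
by case: s; rewrite ?expr1 -?one2 // /diag2 opp_block_mx !oppr0.
Qed.

Lemma dbl_mul x y : dbl x * dbl y = diag2 (x * y) (x * y).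
Proof. by rewrite mul_diag2 mulrNN. Qed.

Lemma dbl_anti x y : anti x y -> anti (dbl x) (dbl y).
Proof. by move/antiP=> h; apply/antiP; rewrite !dbl_mul /diag2 opp_block_mx oppr0 h. Qed.

Lemma Jmx_sqr : Jmx * Jmx = (-1) ^+ true.
Proof.
by rewrite -diag2_sign -mulmxE mulmx_block !block_mxE.
Qed.

Lemma Qmx_sqr : Qmx * Qmx = (-1) ^+ false.
Proof.
by rewrite -diag2_sign -mulmxE mulmx_block !block_mxE.
Qed.

Lemma Qmx_Jmx_anti : anti Qmx Jmx.
Proof.
by apply/antiP; rewrite -!mulmxE !mulmx_block opp_block_mx !block_mxE.
Qed.

Lemma Qmx_dbl_anti x : anti Qmx (dbl x).
Proof.
by apply/antiP; rewrite -!mulmxE !mulmx_block opp_block_mx !block_mxE.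
Qed.

Lemma dbl_Jmx_anti x : anti (dbl x) Jmx.
Proof.
by apply/antiP; rewrite -!mulmxE !mulmx_block opp_block_mx !block_mxE.
Qed.

Definition double (L : seq (bool * 'M[R]_d)) : seq (bool * 'M[R]_(d + d)) :=
  (false, Qmx) :: (map (fun p => (p.1, dbl p.2)) L ++ [:: (true, Jmx)]).

Lemma signed_family_double L : signed_family L -> signed_family (double L).
Proof.
move=> /andP [sq pw]; apply/andP; split.
  rewrite /= Qmx_sqr eqxx /= all_cat /= Jmx_sqr eqxx !andbT all_map.
  by apply/allP=> p /(allP sq) /eqP /= xx; rewrite dbl_mul xx diag2_sign.
rewrite /double pairwise_cons pairwise_cat all_cat /= Qmx_Jmx_anti !andbT all_map.
apply/and3P; split.
- by apply/allP=> p _ /=; apply: Qmx_dbl_anti.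
- by rewrite allrel1r all_map; apply/allP => p _ /=; apply: dbl_Jmx_anti.
- by rewrite pairwise_map; apply: sub_pairwise pw => p q /= /dbl_anti.
Qed.

Lemma count_double L : count fst (double L) = (count fst L).+1.
Proof. by rewrite /= count_cat count_map /= addn1. Qed.

End Doubling.

(* Hurwitz--Radon periodicity: 'M_(2^(b + 4c)) contains a signed family with
   2^b - 1 + 8c square roots of -1 (b < 4).  The cases c = 0 are built by
   hand from doublings; one period (c |-> c + 1) consists of four doublings,
   which bring four involutions to the front, followed by a flip of these. *)
Section Periodicity.
Variable R : pzRingType.

Definition has_signed_family (d k : nat) :=
  exists L : seq (bool * 'M[R]_d), signed_family L /\ (k <= count fst L)%N.

Lemma has_signed_family_le d k k' :
  (k' <= k)%N -> has_signed_family d k -> has_signed_family d k'.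
Proof. by move=> le [L [F c]]; exists L; split => //; apply: leq_trans c. Qed.

Lemma has_signed_family_1_0 : has_signed_family 1 0.
Proof. by exists [::]. Qed.

Lemma has_signed_family_2_1 : has_signed_family 2 1.
Proof.
exists (double ([::] : seq (bool * 'M[R]_1))).
by split; first exact: (@signed_family_double R 1 [::] isT).
Qed.

(* From [Q, diag(Q, -Q), diag(J, -J), J] keep the two square roots of -1
   and adjoin their product. *)
Lemma has_signed_family_4_3 : has_signed_family 4 3.
Proof.
have F : signed_family (double (double ([::] : seq (bool * 'M[R]_1)))).
  by do 2 apply: signed_family_double.
move/signed_family_filter: F; rewrite /double /= => /signed_family_adjoin2 F.
by eexists; split; first exact: F.
Qed.

(* Adjoin the involution (Q diag(Q, -Q)) (diag(J, -J) J) to the doubled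
   doubling, double once more and flip the four leading involutions. *)
Lemma has_signed_family_8_7 : has_signed_family 8 7.
Proof.
have F : signed_family (double (double ([::] : seq (bool * 'M[R]_1)))).
  by do 2 apply: signed_family_double.
move: F; rewrite /double /= => /signed_family_adjoin4 /signed_family_double.
rewrite /double /= => /signed_family_flip4 F.
by eexists; split; first exact: F.
Qed.

Lemma has_signed_family_period d k :
  has_signed_family d k -> has_signed_family (16 * d) (k + 8).
Proof.
case=> L [F c].
have -> : (16 * d = (((d + d) + (d + d)) + ((d + d) + (d + d))) +
                    (((d + d) + (d + d)) + ((d + d) + (d + d))))%N by lia.
set L4 := double (double (double (double L))).
have F4 : signed_family L4 by do 4 apply: signed_family_double.
have C4 : count fst L4 = (count fst L + 4)%N by rewrite !count_double addn4.
have [a [b [c' [e [rest E]]]]] : exists a b c e rest,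
    L4 = [:: (false, a), (false, b), (false, c), (false, e) & rest].
  by rewrite /L4 /double /=; do 5 eexists.
rewrite E in F4 C4.
eexists; split; first exact: signed_family_flip4 F4.
by move: C4 => /=; lia.
Qed.

Lemma has_signed_family_pow2 b c :
  (b < 4)%N -> has_signed_family (2 ^ (b + 4 * c)) (2 ^ b - 1 + 8 * c).
Proof.
move=> b4; elim: c => [|c IH].
  rewrite muln0 addn0 muln0 addn0.
  case: b b4 => [|[|[|[|b]]]] // _.
  - exact: has_signed_family_1_0.
  - exact: has_signed_family_2_1.
  - exact: has_signed_family_4_3.
  - exact: has_signed_family_8_7.
have -> : (2 ^ (b + 4 * c.+1) = 16 * 2 ^ (b + 4 * c))%N by rewrite mulnS addnCA expnD.
have -> : (2 ^ b - 1 + 8 * c.+1 = (2 ^ b - 1 + 8 * c) + 8)%N by rewrite mulnS; lia.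
exact: has_signed_family_period.
Qed.

End Periodicity.

(* A family A_1, ..., A_k of real matrices is eigenfree when no nonzero real
   linear combination sum x_i A_i has a real eigenvector, and the zero
   combination only the eigenvalue 0.  Anticommuting square roots of -1 are
   eigenfree since (sum x_i A_i)^2 = -(sum x_i^2) I. *)
Section Eigenfree.
Variable R : rcfType.

Definition eigenfree k d (A : 'I_k -> 'M[R]_d) :=
  forall (x : 'I_k -> R) (lam : R) (v : 'rV[R]_d),
  (\sum_i x i *: A i) *m v^T = lam *: v^T -> v = 0 \/ ((forall i, x i = 0) /\ lam = 0).

Lemma sqr_clifford_comb k d (A : 'I_k -> 'M[R]_d) (x : 'I_k -> R) :
  (forall i, A i *m A i = - 1%:M) ->
  (forall i j, i != j -> A i *m A j = - (A j *m A i)) ->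
  (\sum_i x i *: A i) *m (\sum_i x i *: A i) = - ((\sum_i x i ^+ 2) *: (1%:M : 'M[R]_d)).
Proof.
move=> Asq Aanti.
have half_cancel (X Y : 'M[R]_d) : X *+ 2 = Y *+ 2 -> X = Y.
  rewrite -!scaler_nat => /(congr1 (fun Z => (2%:R : R)^-1 *: Z)).
  by rewrite !scalerA mulVf ?pnatr_eq0 // !scale1r.
pose P i j := (x i * x j) *: (A i *m A j).
have -> : (\sum_i x i *: A i) *m (\sum_i x i *: A i) = \sum_i \sum_j P i j.
  rewrite mulmx_suml; apply: eq_bigr => i _; rewrite mulmx_sumr.
  by apply: eq_bigr => j _; rewrite /P -scalemxAl -scalemxAr scalerA.
apply: half_cancel; rewrite mulr2n {2}exchange_big -big_split /=.
rewrite scaler_suml -sumrN -sumrMnl; apply: eq_bigr => i _.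
rewrite -big_split /= (bigD1 i) //= big1 ?addr0.
  by rewrite /P Asq -mulr2n expr2 scalerN.
move=> j ji; rewrite /P [x j * x i]mulrC -scalerDr Aanti 1?eq_sym // addNr scaler0 //.
Qed.

(* Hence an eigenvalue lam of such a combination satisfies
   lam^2 + sum x_i^2 = 0. *)
Lemma eigenfree_clifford k d (A : 'I_k -> 'M[R]_d) :
  (forall i, A i *m A i = - 1%:M) ->
  (forall i j, i != j -> A i *m A j = - (A j *m A i)) -> eigenfree A.
Proof.
move=> Asq Aanti x lam v Hv.
have H2 : (\sum_i x i *: A i) *m ((\sum_i x i *: A i) *m v^T) = lam ^+ 2 *: v^T.
  by rewrite Hv -scalemxAr Hv scalerA expr2.
rewrite mulmxA sqr_clifford_comb // mulNmx -scalemxAl mul1mx in H2.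
move/eqP: H2; rewrite eq_sym -subr_eq0 opprK -scalerDl scaler_eq0.
case/orP=> [|/eqP vT]; last by left; apply: trmx_inj; rewrite vT trmx0.
rewrite paddr_eq0 ?sqr_ge0 ?sumr_ge0 // => [/andP[l0 /eqP s0]|i _]; last exact: sqr_ge0.
right; split; last by move: l0; rewrite sqrf_eq0 => /eqP.
move=> i; apply/eqP; rewrite -sqrf_eq0.
by move/psumr_eq0P: s0 => -> // j _; apply: sqr_ge0.
Qed.

Lemma eigenfree_of_signed_family d k :
  has_signed_family R d k -> exists A : 'I_k -> 'M[R]_d, eigenfree A.
Proof.
case=> L [/andP[sqL pwL] c].
set s := [seq p.2 | p <- L & p.1].
have ss : size s = count fst L by rewrite size_map size_filter.
have pws : pairwise (@anti _) s by rewrite pairwise_map; apply: pairwise_filter.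
have sqs y : y \in s -> y * y = -1.
  case/mapP=> p; rewrite mem_filter => /andP[p1 pL] ->.
  by move/allP: sqL => /(_ _ pL) /eqP; rewrite p1.
have ik (i : 'I_k) : (i < size s)%N by rewrite ss (leq_trans (ltn_ord i) c).
exists (fun i => s`_i); apply: eigenfree_clifford.
  by move=> i; rewrite mulmxE sqs // mem_nth.
have anti_lt (i j : 'I_k) : (i < j)%N -> anti s`_i s`_j.
  by move=> lt; move/pairwiseP: pws => /(_ 0 i j); apply; rewrite ?inE ?ik.
move=> i j ij; rewrite !mulmxE; apply/antiP.
have [lt|ge] := ltnP i j; first exact: anti_lt.
apply: anti_sym; apply: anti_lt.
by rewrite ltn_neqAle ge andbT; apply: contra ij => /eqP/val_inj ->.
Qed.

Lemma sum_diag_block k d1 d2 (F : 'I_k -> 'M[R]_d1) (G : 'I_k -> 'M[R]_d2) :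
  \sum_i block_mx (F i) 0 0 (G i) = block_mx (\sum_i F i) 0 0 (\sum_i G i).
Proof.
elim/big_rec3: _ => [|i A B C _ ->]; first by rewrite block_mx0.
by rewrite add_block_mx !addr0.
Qed.

Lemma eigenfree_block k d1 d2 (A : 'I_k -> 'M[R]_d1) (B : 'I_k -> 'M[R]_d2) :
  eigenfree A -> eigenfree B -> eigenfree (fun i => block_mx (A i) 0 0 (B i)).
Proof.
move=> EA EB x lam v.
rewrite -[v]hsubmxK tr_row_mx.
under eq_bigr do rewrite scale_block_mx !scaler0.
rewrite sum_diag_block mul_block_col !mul0mx addr0 add0r scale_col_mx.
case/eq_col_mx => /EA [->|]; last by right.
by move=> /EB [->|]; [left; rewrite row_mx0 | right].
Qed.

Lemma eigenfree_mult k d q : (exists A : 'I_k -> 'M[R]_d, eigenfree A) ->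
  exists A : 'I_k -> 'M[R]_(d * q), eigenfree A.
Proof.
move=> [A EA]; elim: q => [|q [B EB]].
  exists (fun _ => 0) => x lam v _; left; apply/rowP => i.
  by have := ltn_ord i; rewrite [X in (_ < X)%N]muln0.
rewrite mulnS; exists (fun i => block_mx (A i) 0 0 (B i)); exact: eigenfree_block.
Qed.

Lemma eigenfree_rho N k :
  (k < rho N)%N -> exists A : 'I_k -> 'M[R]_N, eigenfree A.
Proof.
move=> krho; set e := logn 2 N.
have dvdN : (2 ^ e %| N)%N by apply: pfactor_dvdnn.
have F : has_signed_family R (2 ^ e) k.
  have e_split : (e %% 4 + 4 * (e %/ 4) = e)%N by lia.
  have := has_signed_family_pow2 R (e %/ 4) (ltn_pmod e (isT : (0 < 4)%N)).
  by rewrite e_split; apply: has_signed_family_le; move: krho; rewrite /rho -/e; lia.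
have := eigenfree_mult (N %/ 2 ^ e) (eigenfree_of_signed_family F).
by rewrite mulnC divnK.
Qed.

End Eigenfree.

Section Counterexample.
Variable R : rcfType.

Definition pad l N (A : 'I_l -> 'M[R]_N) : 'I_l -> 'M[R]_(1 + N) :=
  fun i => block_mx 0 0 0 (A i).

(* Taking a = (0, ..., 0, 1) gives M(a, Y) = -I, of negative determinant in
   odd dimension. *)
Lemma inC_odd_dim l n (Y : 'I_l -> 'M[R]_n) : odd n -> inC Y.
Proof.
move=> n_odd; exists (fun i => (i == ord_max)%:R).
rewrite /Mmat big1 => [|k _]; last first.
  by rewrite (_ : widen_ord _ k == ord_max = false) ?scale0r // -val_eqE /= ltn_eqF.
by rewrite eqxx scale1r sub0r -scaleN1r scalemx1 det_scalar -signr_odd n_odd expr1 ltrN10.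
Qed.

Lemma Vset_pad_sub l N (A : 'I_l -> 'M[R]_N) v :
  eigenfree A -> Vset (pad A) v -> (v <= (row_mx 1 0 : 'M[R]_(1, 1 + N)))%MS.
Proof.
move=> EA [x [[i xi0] Hv]]; move: Hv.
rewrite -[v]hsubmxK tr_row_mx /pad.
under eq_bigr do rewrite scale_block_mx !scaler0.
rewrite sum_diag_block big1 // mul_block_col !mul0mx addr0 add0r scale_col_mx.
case/eq_col_mx => _ /EA [->|[x_zero x_last]].
  have -> : row_mx (lsubmx v) 0 = lsubmx v *m (row_mx 1 0 : 'M[R]_(1, 1 + N)).
    by rewrite mul_mx_row mulmx1 mulmx0.
  exact: submxMl.
case/eqP: xi0; have [->|ne] := eqVneq i ord_max; first exact: x_last.
have il : (i < l)%N.
  by rewrite ltn_neqAle -ltnS ltn_ord andbT; apply: contra ne => /eqP h; apply/eqP/val_inj.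
by rewrite -(x_zero (Ordinal il)); congr x; apply: val_inj.
Qed.

Lemma not_inS_of_rank l n (Y : 'I_l -> 'M[R]_n) m (E : 'M[R]_(m, n)) :
  (forall v, Vset Y v -> (v <= E)%MS) -> (\rank E < n)%N -> ~ inS Y.
Proof.
move=> VE rankE [B [Bspan [Bfree _]]].
have BE : (B <= E)%MS.
  apply/row_subP => i; have [k [C [Crow BC]]] := Bspan i.
  by apply: submx_trans BC _; apply/row_subP => j; apply: VE.
by move: (mxrankS BE); rewrite (eqP Bfree) leqNgt rankE.
Qed.

End Counterexample.

Theorem mainTheorem11 (R : rcfType) (m n : nat) :
  (3 <= m)%N -> (m <= n)%N -> (m <= rho (n - 1))%N ->
  exists Y : 'I_(m.-1) -> 'M[R]_n, inC Y /\ ~ inS Y.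
Proof.
move=> m3; case: n => [|N] mn; first by lia.
rewrite subSS subn0 => m_rho.
(* rho N >= 3 forces 2^1 | N: so N > 0 and n = 1 + N is odd. *)
have e_pos : (0 < logn 2 N)%N.
  by rewrite lt0n; apply/eqP => e0; move: m_rho; rewrite /rho e0 mod0n div0n expn0; lia.
have N_pos : (0 < N)%N by move: e_pos; case: N {mn m_rho} => //; rewrite logn0.
have N_even : (2 %| N)%N.
  by apply: dvdn_trans (pfactor_dvdnn 2 N); apply: dvdn_exp e_pos (dvdnn 2).
have [A EA] : exists A : 'I_(m.-1) -> 'M[R]_N, eigenfree A.
  by apply: eigenfree_rho; rewrite -ltnS prednK //; lia.
exists (pad A); split.
  by apply: inC_odd_dim; rewrite /= -dvdn2 N_even.
apply: (@not_inS_of_rank _ _ _ (pad A) 1 (row_mx 1 0)).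
  by move=> v; apply: Vset_pad_sub.
by rewrite (leq_ltn_trans (rank_leq_row _)) // ltnS.
Qed.
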